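(* Let $t\ge0$ with $2t+1\le n$, and let $f\in\mathbf{SB}_n$ be of the form $f=\sigma_{2t+1}+\sum_{i=0}^{2t}\lambda_f(i)\sigma_i$ with $\lambda_f(i)\in\mathbb{F}_2$. Let $g=\sigma_1+\lambda_f(2t)+1$. Then $\deg(gf)\le 2t-1$ (for $t=0$ this means $gf=0$). Moreover: (a) if $\lambda_f(2t)=0$, then $(\sigma_1+1)f=0$ if $\lambda_f(2s)=0$ for all $0\le s\le t-1$, and otherwise $(\sigma_1+1)f$ has degree exactly $2s+1$, where $s$ is the largest index in $\{0,\dots,t-1\}$ with $\lambda_f(2s)=1$; (b) if $\lambda_f(2t)=1$, then $\sigma_1 f=0$ if $\lambda_f(2s)=\lambda_f(2s+1)$ for all $0\le s\le t-1$, and otherwise $\sigma_1f$ has degree exactly $2s+1$, where $s$ is the largest index in $\{0,\dots,t-1\}$ with $\lambda_f(2s)+\lambda_f(2s+1)=1$.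
   Context: $\mathbf{SB}_n$ is the set of symmetric Boolean functions on $n$ variables, $\sigma_i$ the $i$-th elementary symmetric function of $x_1,\dots,x_n$ over $\mathbb{F}_2$ ($\sigma_0=1$). Every $f\in\mathbf{SB}_n$ can be uniquely written $f=\sum_{i=0}^n\lambda_f(i)\sigma_i$ with $\lambda_f(i)\in\mathbb{F}_2$. $\deg$ is the algebraic degree (degree of the algebraic normal form). *)

From mathcomp Require Import all_boot.
Set Implicit Arguments. Unset Strict Implicit. Unset Printing Implicit Defensive.

Definition pt (n : nat) := {ffun 'I_n -> bool}.
Definition BF (n : nat) := {ffun pt n -> bool}.

Definition bf0 (n : nat) : BF n := [ffun _ => false].
Definition bf_const (n : nat) (b : bool) : BF n := [ffun _ => b].
Definition bf_add (n : nat) (f g : BF n) : BF n := [ffun x => f x (+) g x].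
Definition bf_mul (n : nat) (f g : BF n) : BF n := [ffun x => f x && g x].

Definition monom (n : nat) (S : {set 'I_n}) (x : pt n) : bool :=
  \big[andb/true]_(j in S) x j.

Definition sigma (n i : nat) : BF n :=
  [ffun x => \big[addb/false]_(S : {set 'I_n} | #|S| == i) monom S x].

Definition sym_comb (n : nat) (lam : nat -> bool) (m : nat) : BF n :=
  [ffun x => \big[addb/false]_(i < m) (lam i && sigma n i x)].

Definition ind (n : nat) (T : {set 'I_n}) : pt n := [ffun j => j \in T].

(* ANF coefficient of x^S in f (Moebius transform):
   f = sum_S anf f S * x^S, with anf f S = sum_{T subset S} f(1_T). *)
Definition anf (n : nat) (f : BF n) (S : {set 'I_n}) : bool :=
  \big[addb/false]_(T : {set 'I_n} | T \subset S) f (ind T).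

(* algebraic degree: largest |S| with a nonzero ANF coefficient
   (convention: 0 for the zero function; zero is stated separately) *)
Definition deg (n : nat) (f : BF n) : nat :=
  \max_(S : {set 'I_n} | anf f S) #|S|.

From mathcomp Require Import all_boot.
Set Implicit Arguments. Unset Strict Implicit. Unset Printing Implicit Defensive.

(* A symmetric Boolean function only depends on the Hamming weight w of its
   argument, and sigma_i takes the value C(w, i) mod 2 there.  From
   (i + 1) C(w, i + 1) = (w - i) C(w, i) we get, over F_2,
     sigma_1 sigma_2j = sigma_1 sigma_2j+1 = sigma_2j+1,
     (sigma_1 + 1) sigma_2j = sigma_2j + sigma_2j+1,  (sigma_1 + 1) sigma_2j+1 = 0,
   so multiplying a symmetric combination sum c_i sigma_i by sigma_1 or by
   sigma_1 + 1 gives again an explicit symmetric combination.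
   Applied to f = sigma_2t+1 + sum_{i <= 2t} lam_i sigma_i, the two top terms
   cancel and g f is a combination of sigma_0 .. sigma_2t-1 whose coefficients
   come in pairs (2s, 2s+1).  Finally the ANF of sum c_i sigma_i has coefficient
   c_|S| at x^S, which identifies zero-ness and the exact degree of such a
   combination with its largest nonzero coefficient. *)

Lemma big_addb_odd_card (T : finType) (P Q : pred T) :
  \big[addb/false]_(j | P j) Q j = odd #|[pred j | P j && Q j]|.
Proof.
have oddM := @big_morph bool nat odd false addb 0 addn oddD (erefl false).
rewrite -sum1_card oddM big_mkcondr /=.
by apply: eq_bigr => j _; case: (Q j).
Qed.

Lemma monomE n (S : {set 'I_n}) (x : pt n) :
  monom S x = (S \subset [set j | x j]).
Proof.
rewrite /monom big_andE; apply/forallP/subsetP => H j.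
  by move=> jS; rewrite inE; have := H j; rewrite jS.
by apply/implyP => /H; rewrite inE.
Qed.

Definition wt n (x : pt n) : nat := #|[set j | x j]|.

Lemma sigmaE n i (x : pt n) : sigma n i x = odd 'C(wt x, i).
Proof.
rewrite ffunE /wt -cards_draws.
under eq_bigr do rewrite monomE.
by rewrite big_addb_odd_card; congr odd; apply: eq_card => S; rewrite !inE andbC.
Qed.

Lemma sigma1E n (x : pt n) : sigma n 1 x = odd (wt x).
Proof. by rewrite sigmaE bin1. Qed.

Definition sym_val (w : nat) (c : nat -> bool) (m : nat) : bool :=
  \big[addb/false]_(i < m) (c i && odd 'C(w, i)).

Lemma sym_combE n c m (x : pt n) : sym_comb n c m x = sym_val (wt x) c m.
Proof. by rewrite ffunE /sym_val; apply: eq_bigr => i _; rewrite sigmaE. Qed.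

(* sigma_1 sigma_i = sigma_i for odd i and sigma_{i+1} for even i,
   a consequence of (i + 1) C(w, i + 1) = (w - i) C(w, i). *)
Lemma odd_mul_odd_bin w i :
  odd w && odd 'C(w, i) = if odd i then odd 'C(w, i) else odd 'C(w, i.+1).
Proof.
have [ltwi|leiw] := ltnP w i.
  by rewrite (bin_small ltwi) (bin_small (leqW ltwi)) andbF; case: ifP.
have := congr1 odd (mul_bin_left w i); rewrite !oddM oddB //=.
by case: (odd i); case: (odd w); case: (odd 'C(w, i)) => //=;
  case: (odd 'C(w, i.+1)).
Qed.

Lemma even_mul_odd_bin w i :
  ~~ odd w && odd 'C(w, i) =
  if odd i then false else odd 'C(w, i) (+) odd 'C(w, i.+1).
Proof.
have -> : ~~ odd w && odd 'C(w, i) = odd 'C(w, i) (+) (odd w && odd 'C(w, i)).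
  by case: (odd w); case: (odd 'C(w, i)).
by rewrite odd_mul_odd_bin; case: (odd i); rewrite ?addbb.
Qed.

Lemma sigma1_mul_sym_comb n c k :
  bf_mul (sigma n 1) (sym_comb n c k.*2) =
  sym_comb n (fun i => odd i && (c i (+) c i.-1)) k.*2.
Proof.
apply/ffunP => x; rewrite ffunE sigma1E !sym_combE.
elim: k => [|k IH]; first by rewrite /sym_val !big_ord0 andbF.
rewrite doubleS /sym_val !big_ord_recr /=; rewrite /sym_val in IH.
rewrite !andb_addr IH !(andbCA (odd _)) !odd_mul_odd_bin /= odd_double /=.
by rewrite addbF andb_addl -addbA (addbC (c k.*2 && _)).
Qed.

Lemma sigma1C_mul_sym_comb n c k :
  bf_mul (bf_add (sigma n 1) (bf_const n true)) (sym_comb n c k.*2) =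
  sym_comb n (fun i => c (i./2).*2) k.*2.
Proof.
apply/ffunP => x.
rewrite ffunE [bf_add _ _ _]ffunE [bf_const _ _ _]ffunE sigma1E addbT !sym_combE.
elim: k => [|k IH]; first by rewrite /sym_val !big_ord0 andbF.
rewrite doubleS /sym_val !big_ord_recr /=; rewrite /sym_val in IH.
rewrite !andb_addr IH !(andbCA (~~ odd _)) !even_mul_odd_bin /= odd_double /=.
by rewrite doubleK uphalf_double andbF addbF andb_addr addbA.
Qed.

Lemma sym_comb_drop2 n c d m :
  (forall i, i < m -> c i = d i) -> c m = false -> c m.+1 = false ->
  sym_comb n c m.+2 = sym_comb n d m.
Proof.
move=> cd cm cm1; apply/ffunP => x; rewrite !ffunE !big_ord_recr /= cm cm1 !addbF.
by apply: eq_bigr => i _; rewrite cd.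
Qed.

Lemma sigma_add_sym_comb n c m :
  bf_add (sigma n m) (sym_comb n c m) = sym_comb n (fun i => (i == m) || c i) m.+1.
Proof.
apply/ffunP => x; rewrite [bf_add _ _ _]ffunE ![sym_comb _ _ _ _]ffunE.
rewrite big_ord_recr /= eqxx addbC; congr addb.
by apply: eq_bigr => i _; rewrite ltn_eqF.
Qed.

Lemma card_subset_interval (T0 : finType) (U S : {set T0}) : U \subset S ->
  #|[set T : {set T0} | (U \subset T) && (T \subset S)]| = 2 ^ #|S :\: U|.
Proof.
move=> US.
have -> : [set T : {set T0} | (U \subset T) && (T \subset S)] =
          (fun V => V :|: U) @: powerset (S :\: U).
  apply/setP => T; rewrite !inE; apply/andP/imsetP.
    case=> /subsetP UT TS; exists (T :\: U); first by rewrite powersetE setSD.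
    apply/setP => x; rewrite !inE; case xU: (x \in U); rewrite ?orbT ?orbF //=.
    by rewrite UT.
  case=> V; rewrite powersetE => /subsetP VS ->; split; first exact: subsetUr.
  apply/subsetP => x; rewrite inE; case/orP; last by move/(subsetP US).
  by move/VS; rewrite inE => /andP[].
rewrite card_in_imset ?card_powerset //.
move=> V1 V2; rewrite !powersetE => /subsetP H1 /subsetP H2 E; apply/setP => x.
have := congr1 (fun A : {set T0} => x \in A) E; rewrite /= !inE.
case h1: (x \in V1); case h2: (x \in V2) => //=.
  by move: (H1 x h1); rewrite inE => /andP[/negbTE -> _].
by move: (H2 x h2); rewrite inE => /andP[/negbTE -> _].
Qed.

Lemma odd_subset_interval (T0 : finType) (U S : {set T0}) :
  \big[addb/false]_(T : {set T0} | T \subset S) (U \subset T) = (U == S).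
Proof.
rewrite big_addb_odd_card.
case US: (U \subset S).
  set I := [set T : {set T0} | (U \subset T) && (T \subset S)].
  rewrite (eq_card (B := I)); last by move=> T; rewrite !inE andbC.
  by rewrite card_subset_interval // oddX orbF cards_eq0 setD_eq0 eqEsubset US.
rewrite eq_card0; last first.
  move=> T; rewrite !inE; apply/negbTE/negP => /andP[TS UT].
  by move: US; rewrite (subset_trans UT TS).
by apply/esym/negbTE/eqP => E; move: US; rewrite E subxx.
Qed.

Lemma ind_support n (T : {set 'I_n}) : [set j | ind T j] = T.
Proof. by apply/setP => j; rewrite !inE ffunE. Qed.

Lemma anf_sigma n i (S : {set 'I_n}) : anf (sigma n i) S = (#|S| == i).
Proof.
rewrite /anf.
under eq_bigr => T _.
  rewrite ffunE.
  under eq_bigr => U _ do rewrite monomE ind_support.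
  over.
rewrite exchange_big /=.
under eq_bigr => U _ do rewrite odd_subset_interval.
rewrite big_addb_odd_card; case: (eqVneq #|S| i) => H.
  rewrite (eq_card (B := pred1 S)) ?card1 // => U; rewrite !inE.
  by apply/andb_idl => /eqP ->; rewrite H.
rewrite eq_card0 // => U; rewrite !inE; apply/negbTE/negP => /andP[/eqP E1 /eqP E].
by rewrite -E1 E eqxx in H.
Qed.

Lemma big_addb_pick (c : nat -> bool) m k :
  \big[addb/false]_(i < m) (c i && (k == i :> nat)) = (k < m) && c k.
Proof.
elim: m => [|m IH]; first by rewrite big_ord0.
rewrite big_ord_recr /= IH.
case: (ltngtP k m) => [km|mk|->].
- by rewrite andbF addbF ltnS (ltnW km).
- by rewrite andbF addbF ltnS leqNgt mk.
- by rewrite andbT ltnSn.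
Qed.

Lemma anf_sym_comb n c m (S : {set 'I_n}) :
  anf (sym_comb n c m) S = (#|S| < m) && c #|S|.
Proof.
rewrite /anf.
under eq_bigr => T _ do rewrite ffunE.
rewrite exchange_big /= -big_addb_pick.
apply: eq_bigr => i _; case: (c i) => /=; last by rewrite big1.
by rewrite -anf_sigma.
Qed.

Lemma anf_bf0 n (S : {set 'I_n}) : anf (bf0 n) S = false.
Proof. by rewrite /anf big1 // => T _; rewrite ffunE. Qed.

Lemma sym_comb_eq0 n c m :
  (forall i, i < m -> c i = false) -> sym_comb n c m = bf0 n.
Proof.
move=> c0; apply/ffunP => x; rewrite ffunE [RHS]ffunE big1 // => i _.
by rewrite c0.
Qed.

Lemma deg_sym_comb_le n c m : deg (sym_comb n c m) <= m - 1.
Proof.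
apply/bigmax_leqP => S; rewrite anf_sym_comb => /andP[Sm _].
by rewrite subn1 -ltnS (ltn_predK Sm).
Qed.

(* If c_k is the last nonzero coefficient and k <= n, the combination is nonzero
   of degree exactly k (a k-subset of the n variables witnesses the degree). *)
Lemma deg_sym_comb_eq n (c : nat -> bool) m k : k < m -> k <= n -> c k ->
  (forall i, k < i < m -> c i = false) ->
  sym_comb n c m <> bf0 n /\ deg (sym_comb n c m) = k.
Proof.
move=> km kn ck c_above.
have [S0 /eqP cardS0] : exists S : {set 'I_n}, #|S| == k.
  have : 0 < #|[set A : {set 'I_n} | #|A| == k]|.
    by rewrite card_draws card_ord bin_gt0.
  by case/card_gt0P => S; rewrite inE; exists S.
have anfS0 : anf (sym_comb n c m) S0 by rewrite anf_sym_comb cardS0 km ck.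
split; first by move=> E; move: anfS0; rewrite E anf_bf0.
apply/eqP; rewrite eqn_leq; apply/andP; split; last first.
  by rewrite -cardS0; apply: leq_bigmax_cond.
apply/bigmax_leqP => S; rewrite anf_sym_comb => /andP[Sm cS].
rewrite leqNgt; apply/negP => kS.
by move: (c_above #|S|); rewrite kS Sm cS => /(_ isT).
Qed.

(* Both products of the
   theorem have this shape, so this gives their zero-ness and exact degree. *)
Section PairedCoefficients.
Variables (n t : nat) (d e : nat -> bool).
Hypothesis d_odd : forall s, d s.*2.+1 = e s.
Hypothesis d_even : forall s, d s.*2 -> e s.

Lemma paired_coef i : d i -> e i./2.
Proof.
by rewrite -{1}(odd_double_half i); case: (odd i); rewrite ?d_odd //; apply: d_even.
Qed.

Lemma paired_sym_comb_eq0 :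
  (forall s, s < t -> e s = false) -> sym_comb n d t.*2 = bf0 n.
Proof.
move=> e0; apply: sym_comb_eq0 => i it; apply/negbTE/negP => /paired_coef.
by rewrite e0 // ltn_half_double.
Qed.

Lemma paired_sym_comb_deg s : t.*2 <= n -> s < t -> e s ->
  (forall s', s < s' < t -> e s' = false) ->
  sym_comb n d t.*2 <> bf0 n /\ deg (sym_comb n d t.*2) = s.*2.+1.
Proof.
move=> tn st es e_above.
have s2t : s.*2.+1 < t.*2 by rewrite ltn_Sdouble.
apply: deg_sym_comb_eq => //; first by rewrite (leq_trans (ltnW s2t)).
  by rewrite d_odd.
move=> i /andP[si it]; apply/negbTE/negP => /paired_coef.
by rewrite e_above // gtn_half_double si ltn_half_double.
Qed.
End PairedCoefficients.

Lemma sigma1C_mul_f n t lam : lam t.*2 = false ->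
  bf_mul (bf_add (sigma n 1) (bf_const n true))
         (bf_add (sigma n t.*2.+1) (sym_comb n lam t.*2.+1)) =
  sym_comb n (fun i => lam (i./2).*2) t.*2.
Proof.
move=> lam2t; rewrite sigma_add_sym_comb -doubleS sigma1C_mul_sym_comb doubleS.
apply: sym_comb_drop2 => [i it||]; rewrite ?doubleK ?uphalf_double.
- rewrite ltn_eqF //; apply: (leq_ltn_trans _ (leqW it)).
  by rewrite -{2}(odd_double_half i) leq_addl.
- by rewrite ltn_eqF.
- by rewrite /= uphalf_double ltn_eqF.
Qed.

Lemma sigma1_mul_f n t lam : lam t.*2 = true ->
  bf_mul (sigma n 1) (bf_add (sigma n t.*2.+1) (sym_comb n lam t.*2.+1)) =
  sym_comb n (fun i => odd i && (lam i (+) lam i.-1)) t.*2.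
Proof.
move=> lam2t; rewrite sigma_add_sym_comb -doubleS sigma1_mul_sym_comb doubleS.
apply: sym_comb_drop2 => [i it||]; rewrite ?odd_double //.
  rewrite (ltn_eqF (leqW it)) ltn_eqF //.
  exact: leq_ltn_trans (leq_pred i) (leqW it).
by rewrite /= eqxx ltn_eqF // lam2t odd_double.
Qed.

Lemma sigma1C_mul_f_deg n t lam : t.*2 <= n -> lam t.*2 = false ->
  let h := bf_mul (bf_add (sigma n 1) (bf_const n true))
                  (bf_add (sigma n t.*2.+1) (sym_comb n lam t.*2.+1)) in
  ((forall s, s < t -> lam (2 * s) = false) -> h = bf0 n) /\
  (forall s, s < t -> lam (2 * s) = true ->
     (forall s', s < s' < t -> lam (2 * s') = false) ->
     h <> bf0 n /\ deg h = 2 * s + 1).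
Proof.
move=> tn lam2t h; rewrite /h sigma1C_mul_f //.
pose c i := lam (i./2).*2; pose e s := lam s.*2.
have c_odd s : c s.*2.+1 = e s by rewrite /c /= uphalf_double.
have c_even s : c s.*2 -> e s by rewrite /c doubleK.
split=> [lam0 | s st lams above].
  by apply: (paired_sym_comb_eq0 n c_odd c_even) => s st; rewrite /e -mul2n lam0.
rewrite mul2n addn1 in lams *.
by apply: (paired_sym_comb_deg c_odd c_even tn st) => // s' ss'; rewrite /e -mul2n above.
Qed.

Lemma sigma1_mul_f_deg n t lam : t.*2 <= n -> lam t.*2 = true ->
  let h := bf_mul (sigma n 1) (bf_add (sigma n t.*2.+1) (sym_comb n lam t.*2.+1)) in
  ((forall s, s < t -> lam (2 * s) = lam (2 * s + 1)) -> h = bf0 n) /\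
  (forall s, s < t -> lam (2 * s) (+) lam (2 * s + 1) = true ->
     (forall s', s < s' < t -> lam (2 * s') = lam (2 * s' + 1)) ->
     h <> bf0 n /\ deg h = 2 * s + 1).
Proof.
move=> tn lam2t h; rewrite /h sigma1_mul_f //.
pose c i := odd i && (lam i (+) lam i.-1); pose e s := lam s.*2 (+) lam s.*2.+1.
have c_odd s : c s.*2.+1 = e s by rewrite /c /= odd_double addbC.
have c_even s : c s.*2 -> e s by rewrite /c odd_double.
have e0 s : lam (2 * s) = lam (2 * s + 1) -> e s = false.
  by rewrite /e mul2n addn1 => ->; rewrite addbb.
split=> [lam_eq | s st es above].
  by apply: (paired_sym_comb_eq0 n c_odd c_even) => s st; rewrite e0 ?lam_eq.
rewrite mul2n addn1 in es *.
by apply: (paired_sym_comb_deg c_odd c_even tn st) => // s' ss'; rewrite e0 ?above.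
Qed.

Theorem theorem3 (n t : nat) (lam : nat -> bool) (Hn : 2 * t + 1 <= n) :
  let f : BF n := bf_add (sigma n (2 * t + 1)) (sym_comb n lam (2 * t + 1)) in
  let g : BF n := bf_add (sigma n 1) (bf_const n (lam (2 * t) (+) true)) in
  [/\ (t = 0 -> bf_mul g f = bf0 n),
      (0 < t -> deg (bf_mul g f) <= 2 * t - 1),
      (lam (2 * t) = false ->
        let h := bf_mul (bf_add (sigma n 1) (bf_const n true)) f in
        ((forall s, s < t -> lam (2 * s) = false) -> h = bf0 n) /\
        (forall s, s < t -> lam (2 * s) = true ->
           (forall s', s < s' < t -> lam (2 * s') = false) ->
           h <> bf0 n /\ deg h = 2 * s + 1))
    & (lam (2 * t) = true ->
        let h := bf_mul (sigma n 1) f in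
        ((forall s, s < t -> lam (2 * s) = lam (2 * s + 1)) -> h = bf0 n) /\
        (forall s, s < t -> lam (2 * s) (+) lam (2 * s + 1) = true ->
           (forall s', s < s' < t -> lam (2 * s') = lam (2 * s' + 1)) ->
           h <> bf0 n /\ deg h = 2 * s + 1))].
Proof.
rewrite !mul2n !addn1 in Hn * => f g.
have tn : t.*2 <= n := ltnW Hn.
(* g is sigma_1 or sigma_1 + 1, so g f is a combination of sigma_0 .. sigma_2t-1 *)
have [d gf] : exists d, bf_mul g f = sym_comb n d t.*2.
  case lam2t: (lam t.*2).
  - exists (fun i => odd i && (lam i (+) lam i.-1)).
    rewrite -(sigma1_mul_f n lam2t) /g lam2t; congr bf_mul.
    by apply/ffunP => x; rewrite [bf_add _ _ _]ffunE [bf_const _ _ _]ffunE addbF.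
  - by exists (fun i => lam (i./2).*2); rewrite -(sigma1C_mul_f n lam2t) /g lam2t.
split=> [t0 | _ | lam2t | lam2t].
- by rewrite gf t0; apply: sym_comb_eq0.
- by rewrite gf; apply: deg_sym_comb_le.
- exact: sigma1C_mul_f_deg.
- exact: sigma1_mul_f_deg.
Qed.
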